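(* Let $\mathfrak g$ be a nilpotent Lie algebra of step $s$, $\overline X\in\mathfrak g/[\mathfrak g,\mathfrak g]$, and $x\in\mathfrak g$ a representative of $\overline X$. Define $\mathfrak g^{(0)}=\mathfrak g^{(1)}=\mathfrak g$ and $\mathfrak g^{(i+1)}=[\mathfrak g,\mathfrak g^{(i)}]+[x,\mathfrak g^{(i-1)}]$ for $i\ge1$. Then $\mathfrak g^{(2)}=[\mathfrak g,\mathfrak g]$, and for $k\ge3$, $\mathfrak g^{(k)}$ is the linear span of the iterated brackets $[x_1,[x_2,\dots[x_{j-1},x_j]\dots]]$ with either $j\ge k$, or $j<k$ and at least $k-j$ of the $x_i$ congruent to $x$ modulo $[\mathfrak g,\mathfrak g]$. In particular the sequence $(\mathfrak g^{(i)})$ depends only on $\overline X$ and not on $x$, and $[\mathfrak g^{(i)},\mathfrak g^{(j)}]\subseteq\mathfrak g^{(i+j)}$ for all $i,j\ge1$. Moreover $\mathfrak g^{[i]}\subseteq\mathfrak g^{(i)}\subseteq\mathfrak g^{[\lfloor i/2\rfloor+1]}$ for all $i\ge1$, and $\mathfrak g^{(2s)}=0$.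
   Context: $\mathfrak g^{[1]}=\mathfrak g$, $\mathfrak g^{[i+1]}=[\mathfrak g,\mathfrak g^{[i]}]$ is the descending central series; step $s$ means $\mathfrak g^{[s+1]}=0$. *)

(* Lie algebras over a field K, carried by an lmodType K.
   Subspaces are represented as predicates V -> Prop (no finite-dimensionality
   is assumed). *)
From mathcomp Require Import all_boot all_order all_algebra.
Set Implicit Arguments. Unset Strict Implicit. Unset Printing Implicit Defensive.
Import GRing.Theory.
Local Open Scope ring_scope.

Section Lie.
Variables (K : fieldType) (V : lmodType K).

Definition is_lie_bracket (br : V -> V -> V) : Prop :=
  [/\ (forall (a : K) (u w z : V), br (a *: u + w) z = a *: br u z + br w z),
      (forall (a : K) (z u w : V), br z (a *: u + w) = a *: br z u + br z w),
      (forall u : V, br u u = 0) &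
      (forall u w z : V, br u (br w z) + br w (br z u) + br z (br u w) = 0)].

Definition full : V -> Prop := fun _ => True.
Definition zero_sp : V -> Prop := fun v => v = 0.
Definition sub_sp (A B : V -> Prop) : Prop := forall v, A v -> B v.
Definition eq_sp (A B : V -> Prop) : Prop := forall v, A v <-> B v.

Definition is_subspace (W : V -> Prop) : Prop :=
  W 0 /\ forall (a : K) (u w : V), W u -> W w -> W (a *: u + w).

Definition lspan (A : V -> Prop) : V -> Prop :=
  fun v => forall W, is_subspace W -> sub_sp A W -> W v.

Definition sum_sp (A B : V -> Prop) : V -> Prop := lspan (fun v => A v \/ B v).

Variable br : V -> V -> V.

Definition br_sp (A B : V -> Prop) : V -> Prop :=
  lspan (fun v => exists a b, [/\ A a, B b & v = br a b]).

Fixpoint lcs (n : nat) : V -> Prop :=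
  match n with
  | 0 | 1 => full
  | S m => br_sp full (lcs m)
  end.

Fixpoint xfilt (x : V) (n : nat) : V -> Prop :=
  match n with
  | 0 | 1 => full
  | S ((S m) as p) => sum_sp (br_sp full (xfilt x p))
                              (br_sp (fun y => y = x) (xfilt x m))
  end.

(* iterated bracket [x_1, [x_2, ... [x_{j-1}, x_j] ...]] of the list
   [:: x_1; ...; x_j]  (empty list gives 0, singleton gives x_1) *)
Fixpoint nest (l : seq V) : V :=
  match l with
  | [::] => 0
  | [:: a] => a
  | a :: l' => br a (nest l')
  end.

End Lie.

(* Write F i for g^(i) and L i for the lower central series g^[i].  After
   generic facts on spans and on bilinear alternating brackets, the section
   Filtration proves everything by inductions over the recursive definitions:
   - one-step facts [g, F k] <= F (k+1) and [x, F k] <= F (k+2), so F decreases;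
   - multiplicativity [F i, F j] <= F (i+j) for ALL i, j, by strong induction
     on i, applying the Jacobi identity to the generators [g, u] and [x, w];
   - comparisons L i <= F i <= L (i/2 + 1); with L (s+1) = 0 this kills F (2s).
   Multiplicativity and F 2 = L 2 show [y, F m] <= F (m+2) for every
   y = x mod [g, g], which gives independence of the representative x.
   For the bracket description a list l has weight size l + #{entries = x mod
   [g, g]}: an iterated bracket of >= 2 elements lies in F (weight), and every
   generator of F k is an iterated bracket of weight >= k. *)
From mathcomp Require Import all_boot all_order all_algebra.
From mathcomp Require Import zify.
From Stdlib Require Import ClassicalEpsilon.
Set Implicit Arguments. Unset Strict Implicit. Unset Printing Implicit Defensive.
Import GRing.Theory.
Local Open Scope ring_scope.

Lemma nat_ind2 (P : nat -> Prop) :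
  P 0%N -> P 1%N -> (forall n, P n -> P n.+1 -> P n.+2) -> forall n, P n.
Proof.
move=> P0 P1 PS n; suff: P n /\ P n.+1 by case.
by elim: n => [|n [Pn Pn1]]; split=> //; apply: PS.
Qed.

Lemma card_nth (T : Type) (x0 : T) (p : pred T) (l : seq T) :
  #|[set i : 'I_(size l) | p (nth x0 l i)]| = count p l.
Proof.
rewrite cardE /enum_mem size_filter -enumT.
transitivity (count p (mkseq (nth x0 l) (size l))); last by rewrite mkseq_nth.
rewrite /mkseq -val_enum_ord -map_comp count_map.
by apply: eq_count => i; rewrite /= inE.
Qed.

Lemma weight_condition (T : Type) (x0 : T) (P : T -> Prop) (p : pred T)
    (pP : forall y, reflect (P y) (p y)) (l : seq T) (k : nat) :
  (k <= size l + count p l)%N <->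
  ((k <= size l)%N \/
   ((size l < k)%N /\
    exists I : {set 'I_(size l)},
      (k - size l <= #|I|)%N /\ (forall i, i \in I -> P (nth x0 l i)))).
Proof.
split=> [Hk | [Hk | [_ [I [HI HIP]]]]].
- have [Hkl | Hlk] := leqP k (size l); [by left | right; split=> //].
  exists [set i : 'I_(size l) | p (nth x0 l i)]; split.
    by rewrite card_nth; lia.
  by move=> i; rewrite inE => /pP.
- lia.
- suff: (#|I| <= count p l)%N by lia.
  rewrite -(card_nth x0); apply: subset_leq_card; apply/subsetP => i Hi.
  by rewrite inE; apply/pP; apply: HIP.
Qed.

Section Subspaces.
Variables (K : fieldType) (V : lmodType K).
Implicit Types (A B W : V -> Prop) (u w : V).

Lemma subspace0 W : is_subspace W -> W 0.
Proof. by case. Qed.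

Lemma subspaceD W u w : is_subspace W -> W u -> W w -> W (u + w).
Proof. by case=> _ H Hu Hw; have := H 1 u w Hu Hw; rewrite scale1r. Qed.

Lemma subspaceZ W a u : is_subspace W -> W u -> W (a *: u).
Proof. by case=> H0 H Hu; have := H a u 0 Hu H0; rewrite addr0. Qed.

Lemma subspaceN W u : is_subspace W -> W u -> W (- u).
Proof. by move=> HW Hu; rewrite -scaleN1r; apply: subspaceZ. Qed.

Lemma lspan_subspace A : is_subspace (lspan A).
Proof.
split; first by move=> W [].
move=> a u w Hu Hw W HW HA; case: (HW) => _ H.
by apply: H; [exact: Hu | exact: Hw].
Qed.

Lemma lspan_ext A v : A v -> lspan A v.
Proof. by move=> Hv W _; apply. Qed.

Lemma lspan_min A W : is_subspace W -> sub_sp A W -> sub_sp (lspan A) W.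
Proof. by move=> HW HA v; apply. Qed.

Lemma lspan_eq A B : eq_sp A B -> eq_sp (lspan A) (lspan B).
Proof. by move=> H v; split=> Hv W HW HS; apply: Hv => // u /H; apply: HS. Qed.

Lemma sum_sp_min A B W :
  is_subspace W -> sub_sp A W -> sub_sp B W -> sub_sp (sum_sp A B) W.
Proof. by move=> HW HA HB; apply: lspan_min => // v [/HA | /HB]. Qed.

Lemma sum_sp_inl A B v : A v -> sum_sp A B v.
Proof. by move=> Hv; apply: lspan_ext; left. Qed.

Lemma sum_sp_inr A B v : B v -> sum_sp A B v.
Proof. by move=> Hv; apply: lspan_ext; right. Qed.

Lemma decr_antitone (P : nat -> V -> Prop) :
  (forall k, sub_sp (P k.+1) (P k)) ->
  forall m n, (m <= n)%N -> sub_sp (P n) (P m).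
Proof.
move=> decr m n /subnKC <-; elim: (n - m)%N => [|d IH] v; first by rewrite addn0.
by rewrite addnS => /decr /IH.
Qed.

End Subspaces.

Section Bracket.
Variables (K : fieldType) (V : lmodType K) (br : V -> V -> V).
Hypothesis Hlie : is_lie_bracket br.
Implicit Types (A B W : V -> Prop) (u w z : V).

Lemma brDl u w z : br (u + w) z = br u z + br w z.
Proof. by case: Hlie => H _ _ _; have := H 1 u w z; rewrite !scale1r. Qed.

Lemma brDr z u w : br z (u + w) = br z u + br z w.
Proof. by case: Hlie => _ H _ _; have := H 1 z u w; rewrite !scale1r. Qed.

Lemma br0l z : br 0 z = 0.
Proof. by apply: (addrI (br 0 z)); rewrite -brDl !addr0. Qed.

Lemma br0r z : br z 0 = 0.
Proof. by apply: (addrI (br z 0)); rewrite -brDr !addr0. Qed.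

Lemma brZl a u z : br (a *: u) z = a *: br u z.
Proof. by case: Hlie => H _ _ _; have := H a u 0 z; rewrite !addr0 br0l addr0. Qed.

Lemma brZr a z u : br z (a *: u) = a *: br z u.
Proof. by case: Hlie => _ H _ _; have := H a z u 0; rewrite !addr0 br0r addr0. Qed.

Lemma brxx u : br u u = 0.
Proof. by case: Hlie. Qed.

Lemma br_anti u w : br u w = - br w u.
Proof.
have := brxx (u + w); rewrite brDl !brDr !brxx add0r addr0 => /eqP.
by rewrite addr_eq0 => /eqP.
Qed.

(* The Jacobi identity as the derivation rule for br a. *)
Lemma br_jacobi a b c : br (br a b) c = br a (br b c) + br b (br c a).
Proof.
case: Hlie => _ _ _ J; rewrite [LHS]br_anti.
by have := J c a b; rewrite -addrA addrC => /eqP; rewrite addr_eq0 => /eqP ->.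
Qed.

Lemma br_preimage_subspace W b :
  is_subspace W -> is_subspace (fun a => W (br a b)).
Proof.
move=> HW; split; first by rewrite br0l; apply: subspace0.
by move=> c u w Hu Hw; rewrite brDl brZl; apply: subspaceD => //; apply: subspaceZ.
Qed.

Lemma br_preimage_subspace_r W a :
  is_subspace W -> is_subspace (fun b => W (br a b)).
Proof.
move=> HW; split; first by rewrite br0r; apply: subspace0.
by move=> c u w Hu Hw; rewrite brDr brZr; apply: subspaceD => //; apply: subspaceZ.
Qed.

Lemma br_sp_in A B a b : A a -> B b -> br_sp br A B (br a b).
Proof. by move=> Ha Hb; apply: lspan_ext; exists a, b. Qed.

Lemma br_sp_min A B W : is_subspace W ->
  (forall a b, A a -> B b -> W (br a b)) -> sub_sp (br_sp br A B) W.
Proof. by move=> HW H; apply: lspan_min => // v [a [b [Ha Hb ->]]]; apply: H. Qed.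

Lemma sum_br_sp_min A1 B1 A2 B2 W : is_subspace W ->
  (forall a b, A1 a -> B1 b -> W (br a b)) ->
  (forall a b, A2 a -> B2 b -> W (br a b)) ->
  sub_sp (sum_sp (br_sp br A1 B1) (br_sp br A2 B2)) W.
Proof.
by move=> HW H1 H2; apply: sum_sp_min => //; apply: br_sp_min.
Qed.

End Bracket.

Section Filtration.
Variables (K : fieldType) (V : lmodType K) (br : V -> V -> V).
Hypothesis Hlie : is_lie_bracket br.
Variable x : V.

Local Notation F := (xfilt br x).
Local Notation L := (lcs br).

Lemma xfilt_subspace k : is_subspace (F k).
Proof. by case: k => [|[|k]] //; apply: lspan_subspace. Qed.

Lemma lcs_subspace k : is_subspace (L k).
Proof. by case: k => [|[|k]] //; apply: lspan_subspace. Qed.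

Lemma xfilt_anti k u w : F k (br w u) -> F k (br u w).
Proof. by rewrite (br_anti Hlie u); apply: (subspaceN (xfilt_subspace _)). Qed.

Lemma xfilt_br k g u : F k u -> F k.+1 (br g u).
Proof. by case: k => [|k] Hu //; apply: sum_sp_inl; apply: br_sp_in. Qed.

Lemma xfilt_brx k u : F k u -> F k.+2 (br x u).
Proof. by move=> Hu; apply: sum_sp_inr; apply: br_sp_in. Qed.

Lemma xfilt_decr k : sub_sp (F k.+1) (F k).
Proof.
elim/nat_ind2: k => // k IH0 IH1.
apply: sum_br_sp_min; first exact: xfilt_subspace.
  by move=> a b _ /IH1; apply: xfilt_br.
by move=> a b -> /IH0; apply: xfilt_brx.
Qed.

Lemma xfilt_antitone m n : (m <= n)%N -> sub_sp (F n) (F m).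
Proof. exact: decr_antitone xfilt_decr m n. Qed.

(* Multiplicativity [F i, F j] <= F (i+j).  For i <= 1 this is the one-step
   fact; for i+2 the Jacobi identity reduces a generator [g, u] or [x, w] of
   F (i+2) to the cases i+1 and i. *)
Lemma xfilt_mul i j u v : F i u -> F j v -> F (i + j) (br u v).
Proof.
elim/ltn_ind: i j u v => -[|[|i]] IH j u v Hu Hv.
- by apply: xfilt_decr; apply: xfilt_br.
- by rewrite add1n; apply: xfilt_br.
move: u Hu; apply: (@sum_br_sp_min _ _ br _ _ _ _ (fun u => F (i.+2 + j) (br u v))).
  exact: br_preimage_subspace (xfilt_subspace _).
- move=> g u _ Hu; rewrite br_jacobi //; apply: (subspaceD (xfilt_subspace _)).
    by rewrite addSn; apply: xfilt_br; apply: (IH i.+1).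
  have Hvg : F j.+1 (br v g) by apply/xfilt_anti/xfilt_br.
  by rewrite addSnnS; apply: (IH i.+1).
- move=> a w -> Hw; rewrite br_jacobi //; apply: (subspaceD (xfilt_subspace _)).
    by rewrite !addSn; apply: xfilt_brx; apply: (IH i).
  have Hvx : F j.+2 (br v x) by apply/xfilt_anti; apply: xfilt_brx.
  by rewrite !addSnnS; apply: (IH i).
Qed.

Lemma lcs_br n g v : L n v -> L n.+1 (br g v).
Proof. by case: n => [|n] Hv //; apply: br_sp_in. Qed.

Lemma lcs_decr k : sub_sp (L k.+1) (L k).
Proof.
elim: k => [|[|k] IH] //; apply: lspan_min; first exact: lcs_subspace.
by move=> v [a [b [_ /IH Hb ->]]]; apply: lcs_br.
Qed.

Lemma lcs_antitone m n : (m <= n)%N -> sub_sp (L n) (L m).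
Proof. exact: decr_antitone lcs_decr m n. Qed.

(* g^[i] <= g^(i): the generators of g^[i+1] are generators of g^(i+1). *)
Lemma lcs_sub_xfilt i : sub_sp (L i) (F i).
Proof.
case: i => [|i] //; elim: i => [|i IH] //; apply: lspan_min.
  exact: xfilt_subspace.
by move=> v [a [b [_ /IH Hb ->]]]; apply: xfilt_br.
Qed.

(* g^(k) <= g^[k/2 + 1]: both kinds of generators raise the bound by one. *)
Lemma xfilt_sub_lcs k : sub_sp (F k) (L (k./2).+1).
Proof.
elim/nat_ind2: k => // k IH0 IH1.
apply: sum_br_sp_min; first exact: lcs_subspace.
  by move=> a b _ /IH1 Hb; apply: (lcs_antitone _ (lcs_br a Hb)); rewrite /=; lia.
by move=> a b -> /IH0; apply: lcs_br.
Qed.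

Lemma xfilt2_eq_lcs2 : eq_sp (F 2) (L 2).
Proof. by move=> v; split=> Hv; [exact: (xfilt_sub_lcs Hv) | exact: (lcs_sub_xfilt Hv)]. Qed.

Lemma xfilt_br_congr y m u : L 2 (y - x) -> F m u -> F m.+2 (br y u).
Proof.
move=> Hy Hu; rewrite -(subrK x y) brDl //; apply: (subspaceD (xfilt_subspace _)).
  by rewrite -add2n; apply: xfilt_mul => //; apply/xfilt2_eq_lcs2.
exact: xfilt_brx.
Qed.

Lemma xfilt_repr x' i : L 2 (x' - x) -> sub_sp (xfilt br x' i) (F i).
Proof.
move=> Hx'; elim/nat_ind2: i => // i IH0 IH1.
apply: sum_br_sp_min; first exact: xfilt_subspace.
  by move=> a b _ /IH1; apply: xfilt_br.
by move=> a b -> /IH0; apply: xfilt_br_congr.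
Qed.

Definition congr_x (y : V) : bool :=
  if excluded_middle_informative (L 2 (y - x)) then true else false.

Lemma congr_xP y : reflect (L 2 (y - x)) (congr_x y).
Proof. by rewrite /congr_x; case: excluded_middle_informative => h; constructor. Qed.

Lemma congr_x_x : congr_x x.
Proof. by apply/congr_xP; rewrite subrr; apply: subspace0 (lcs_subspace _). Qed.

Definition weight (l : seq V) : nat := (size l + count congr_x l)%N.

Lemma xfilt_br_weight a m u : F m u -> F (m.+1 + congr_x a) (br a u).
Proof.
case: (congr_xP a) => Ha Hu; rewrite ?addn1 ?addn0.
  exact: xfilt_br_congr.
exact: xfilt_br.
Qed.

Lemma xfilt_nest_pair a b : F (weight [:: a; b]) (br a b).
Proof.
have -> : weight [:: a; b] = (congr_x a + congr_x b).+2 by rewrite /weight /=; lia.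
case: (congr_xP a) (congr_xP b) => [Ha|Ha] [Hb|Hb].
- have Hbx : F 2 (b - x) by apply/xfilt2_eq_lcs2.
  have Hax : F 2 (a - x) by apply/xfilt2_eq_lcs2.
  rewrite -(subrK x b) brDr //; apply: (subspaceD (xfilt_subspace _)).
    exact: xfilt_br_congr.
  rewrite -(subrK x a) brDl // brxx // addr0; apply: xfilt_anti.
  exact: xfilt_brx.
- by apply: xfilt_br_congr.
- by apply: xfilt_anti; apply: xfilt_br_congr.
- exact: xfilt_br.
Qed.

Lemma xfilt_nest l : (2 <= size l)%N -> F (weight l) (nest br l).
Proof.
elim: l => [|a [|b [|c l]] IH] // _; first exact: xfilt_nest_pair.
have -> : weight [:: a, b, c & l] = ((weight [:: b, c & l]).+1 + congr_x a)%N.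
  by rewrite /weight /=; lia.
by apply: xfilt_br_weight; apply: IH.
Qed.

Definition bracket_span (k : nat) : V -> Prop :=
  lspan (fun v => exists l : seq V,
    [/\ v = nest br l, (0 < size l)%N & (k <= weight l)%N]).

Lemma bracket_span_br k k' a b : (k' <= k.+1 + congr_x a)%N ->
  bracket_span k b -> bracket_span k' (br a b).
Proof.
move=> Hk'; move: b; apply: lspan_min.
  exact: br_preimage_subspace_r (lspan_subspace _).
move=> _ [l [-> Hs Hk]]; apply: lspan_ext; exists (a :: l).
by split=> //; [case: l Hs {Hk} | rewrite /weight /= in Hk *; lia].
Qed.

Lemma xfilt_sub_bracket_span k : sub_sp (F k) (bracket_span k).
Proof.
have small j v : (j <= 1)%N -> bracket_span j v.
  by move=> Hj; apply: lspan_ext; exists [:: v]; split=> //; rewrite /weight /=; lia.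
elim/nat_ind2: k => [v _|v _|k IH0 IH1]; try exact: small.
apply: sum_br_sp_min; first exact: lspan_subspace.
  by move=> a b _ /IH1; apply: bracket_span_br; lia.
by move=> a b -> /IH0; apply: bracket_span_br; rewrite congr_x_x addn1.
Qed.

(* Conversely, from level 3 on every generator of bracket_span k is a
   bracket of at least two elements, of weight at least k. *)
Lemma bracket_span_sub_xfilt k : (3 <= k)%N -> sub_sp (bracket_span k) (F k).
Proof.
move=> Hk; apply: lspan_min; first exact: xfilt_subspace.
move=> _ [l [-> Hs Hl]].
have Hl2 : (2 <= size l)%N.
  by case: l Hs Hl => [|a [|b l]] //; rewrite /weight /=; case: (congr_x a) => /=; lia.
exact: xfilt_antitone Hl _ (xfilt_nest Hl2).
Qed.

Lemma bracket_span_index_sets k :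
  eq_sp (bracket_span k) (lspan (fun v => exists l : seq V,
    [/\ v = nest br l, (0 < size l)%N &
        ((k <= size l)%N \/ ((size l < k)%N /\ exists I : {set 'I_(size l)},
           (k - size l <= #|I|)%N /\
           (forall i : 'I_(size l), i \in I -> L 2 (nth 0 l i - x))))])).
Proof.
apply: lspan_eq => v; split=> -[l [Hv Hs Hw]]; exists l; split=> //;
  exact/(weight_condition 0 congr_xP).
Qed.

End Filtration.

Theorem lemma2p1 (K : fieldType) (V : lmodType K) (br : V -> V -> V)
  (Hlie : is_lie_bracket br) (s : nat)
  (Hstep : eq_sp (lcs br s.+1) (@zero_sp K V)) (x : V) :
  (* g^(2) = [g, g] *)
  eq_sp (xfilt br x 2) (lcs br 2) /\
  (* description of g^(k), k >= 3, by iterated brackets *)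
  (forall k : nat, (3 <= k)%N ->
     eq_sp (xfilt br x k)
       (lspan (fun v => exists l : seq V,
          [/\ v = nest br l, (0 < size l)%N &
              ((k <= size l)%N \/
               ((size l < k)%N /\
                exists I : {set 'I_(size l)},
                  (k - size l <= #|I|)%N /\
                  (forall i : 'I_(size l), i \in I ->
                     lcs br 2 (nth 0 l i - x))))]))) /\
  (* the sequence depends only on x mod [g, g] *)
  (forall x' : V, lcs br 2 (x' - x) ->
     forall i : nat, eq_sp (xfilt br x' i) (xfilt br x i)) /\
  (* [g^(i), g^(j)] is contained in g^(i+j) *)
  (forall i j : nat, (1 <= i)%N -> (1 <= j)%N ->
     sub_sp (br_sp br (xfilt br x i) (xfilt br x j)) (xfilt br x (i + j))) /\
  (* g^[i] <= g^(i) <= g^[floor(i/2)+1] *)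
  (forall i : nat, (1 <= i)%N ->
     sub_sp (lcs br i) (xfilt br x i) /\
     sub_sp (xfilt br x i) (lcs br (i./2).+1)) /\
  (* g^(2s) = 0 *)
  eq_sp (xfilt br x (2 * s)%N) (@zero_sp K V).
Proof.
split; first exact: xfilt2_eq_lcs2.
split.
  move=> k Hk v; split=> Hv.
    by apply/bracket_span_index_sets; apply: xfilt_sub_bracket_span.
  by apply: bracket_span_sub_xfilt => //; apply/bracket_span_index_sets.
split.
  move=> x' Hx' i v; split; first exact: xfilt_repr.
  apply: xfilt_repr => //.
  by rewrite -opprB; apply: subspaceN (lcs_subspace br 2) Hx'.
split.
  by move=> i j _ _; apply: br_sp_min (xfilt_subspace br x _) _ => u v; apply: xfilt_mul.
split; first by move=> i _; split=> v; [apply: lcs_sub_xfilt | apply: xfilt_sub_lcs].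
move=> v; split=> [/xfilt_sub_lcs | ->]; last exact: subspace0 (xfilt_subspace br x _).
by rewrite mul2n doubleK => /Hstep.
Qed.
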